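(* Let $\mathcal{F}$ be an argumentation framework and $S\subseteq A_{\mathcal{F}}$. Then $S\in\mathit{tfstg2}(\mathcal{F})$ if and only if $S$ is conflict-free and $S$ is a stage extension of $[[\mathcal{F}\setminus\Delta_{\mathcal{F},S}]]$.
   Context: An argumentation framework (AF) is $\mathcal{F}=(A_{\mathcal{F}},R_{\mathcal{F}})$ with $R_{\mathcal{F}}\subseteq A_{\mathcal{F}}\times A_{\mathcal{F}}$; $a\rightarrow b$ means $(a,b)\in R_{\mathcal{F}}$. $\mathcal{F}|_B=(A_{\mathcal{F}}\cap B,R_{\mathcal{F}}\cap(B\times B))$. Conflict-free: no $a,b\in S$ with $a\rightarrow b$; $S^\oplus=S\cup\{x:\exists y\in S,\ y\rightarrow x\}$; stage extension: conflict-free $S$ with no conflict-free $T$ such that $S^\oplus\subsetneq T^\oplus$. $\mathrm{SCC}(a)$: set of $b$ with directed attack paths (possibly length 0) from $a$ to $b$ and back. $D_S(X)=\{b\in X:\exists a\in S\setminus X,\ a\rightarrow b\}$. $\mathit{tfstg2}$: $C^0_S(a)=\mathrm{SCC}(a)$; $C^{\alpha+1}_S(a)$ = the strongly connected component of $a$ in $\mathcal{F}|_{C^\alpha_S(a)\setminus D_S(C^\alpha_S(a))}$ (empty if $a$ is not in that set); for limit $\lambda$, $C^\lambda_S(a)$ = the component of $a$ in $\mathcal{F}|_{\bigcap_{\alpha<\lambda}C^\alpha_S(a)}$; $\alpha_S(a)$ = least $\alpha$ with $a\notin C^\alpha_S(a)$ or $C^{\alpha+1}_S(a)=C^\alpha_S(a)$.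 $S\in\mathit{tfstg2}(\mathcal{F})$ iff $S$ is conflict-free and for each $a\in A_{\mathcal{F}}$, either $a\notin C^{\alpha_S(a)}_S(a)$ or $S\cap C^{\alpha_S(a)}_S(a)$ is a stage extension of $\mathcal{F}|_{C^{\alpha_S(a)}_S(a)}$. $a\Rightarrow^B_{\mathcal{F}}b$ means there is a directed attack path from $a$ to $b$ in $\mathcal{F}|_B$. For $D\subseteq A_{\mathcal{F}}$, $\Delta_{\mathcal{F},S}(D)=\{a\in A_{\mathcal{F}}:\exists b\in S\,(b\rightarrow a\text{ and not }a\Rightarrow^{A_{\mathcal{F}}\setminus D}_{\mathcal{F}}b)\}$. This operator is monotone; $\Delta_{\mathcal{F},S}$ (as a set) denotes its least fixed point. $\mathcal{F}\setminus\Delta$ denotes $\mathcal{F}|_{A_{\mathcal{F}}\setminus\Delta}$. For an AF $\mathcal{G}$, $[[\mathcal{G}]]$ is obtained by deleting all attacks between arguments in different strongly connected components of $\mathcal{G}$. *)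

(* Argumentation frameworks over an arbitrary (possibly
   infinite) carrier type [A] with attack relation [R]; sub-frameworks
   F|_B are represented by a carrier predicate [B] together with [R]
   (attacks of F|_B are those of R between members of B). *)
From Stdlib Require Import Relations.

Section AF.
Variable A : Type.

Definition aset := A -> Prop.

Definition subset (P Q : aset) : Prop := forall x, P x -> Q x.
Definition strict_subset (P Q : aset) : Prop :=
  subset P Q /\ exists x, Q x /\ ~ P x.
Definition set_eq (P Q : aset) : Prop := forall x, P x <-> Q x.

Definition edge (B : aset) (R : A -> A -> Prop) (x y : A) : Prop :=
  B x /\ B y /\ R x y.

Definition reach (B : aset) (R : A -> A -> Prop) (a b : A) : Prop :=
  B a /\ clos_refl_trans A (edge B R) a b.

(* strongly connected component of a in F|_B (empty if a is not in B) *)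
Definition scc (B : aset) (R : A -> A -> Prop) (a : A) : aset :=
  fun b => reach B R a b /\ reach B R b a.

Definition conflict_free (R : A -> A -> Prop) (S : aset) : Prop :=
  forall x y, S x -> S y -> ~ R x y.

Definition range (B : aset) (R : A -> A -> Prop) (S : aset) : aset :=
  fun x => S x \/ exists y, S y /\ edge B R y x.

Definition stage (B : aset) (R : A -> A -> Prop) (S : aset) : Prop :=
  subset S B /\ conflict_free R S /\
  ~ (exists T, subset T B /\ conflict_free R T /\
               strict_subset (range B R S) (range B R T)).

Definition Dset (R : A -> A -> Prop) (S X : aset) : aset :=
  fun b => X b /\ exists a, S a /\ ~ X a /\ R a b.

Definition cstep (R : A -> A -> Prop) (S : aset) (a : A) (X : aset) : aset :=
  scc (fun x => X x /\ ~ Dset R S X x) R a.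

(* A transfinite sequence C^alpha_S(a) for alpha <= alpha_S(a), indexed by a
   well-ordered type (I, lt) with greatest element t (playing alpha_S(a)). *)
Definition cseq (R : A -> A -> Prop) (S : aset) (a : A)
  (I : Type) (lt : I -> I -> Prop) (c : I -> aset) (t : I) : Prop :=
  well_founded lt /\
  (forall i j k, lt i j -> lt j k -> lt i k) /\
  (forall i j, lt i j \/ i = j \/ lt j i) /\
  (forall i, i = t \/ lt i t) /\
  (forall i, (forall j, ~ lt j i) -> set_eq (c i) (scc (fun _ => True) R a)) /\
  (forall i j, lt j i -> (forall k, lt k i -> k = j \/ lt k j) ->
     set_eq (c i) (cstep R S a (c j))) /\
  (forall i, (exists j, lt j i) ->
     (forall j, lt j i -> exists k, lt j k /\ lt k i) ->
     set_eq (c i) (scc (fun x => forall j, lt j i -> c j x) R a)) /\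
  (* t is the least index at which a drops out or the sequence stabilises *)
  (~ c t a \/ set_eq (cstep R S a (c t)) (c t)) /\
  (forall i, lt i t -> c i a /\ ~ set_eq (cstep R S a (c i)) (c i)).

Definition tfstg2 (R : A -> A -> Prop) (S : aset) : Prop :=
  conflict_free R S /\
  forall a (I : Type) (lt : I -> I -> Prop) (c : I -> aset) (t : I),
    cseq R S a I lt c t ->
    ~ c t a \/ stage (c t) R (fun x => S x /\ c t x).

Definition DeltaOp (R : A -> A -> Prop) (S : aset) (D : aset) : aset :=
  fun x => exists b, S b /\ R b x /\ ~ reach (fun y => ~ D y) R x b.

(* its least fixed point (Knaster-Tarski: intersection of all prefixed
   points; DeltaOp is monotone) *)
Definition Delta (R : A -> A -> Prop) (S : aset) : aset :=
  fun x => forall D, subset (DeltaOp R S D) D -> D x.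

(* [[F \ Delta]]: carrier A \ Delta, attacks only inside SCCs of F \ Delta *)
Definition FminusDelta (R : A -> A -> Prop) (S : aset) : aset :=
  fun x => ~ Delta R S x.

Definition sccRestrict (B : aset) (R : A -> A -> Prop) : A -> A -> Prop :=
  fun x y => R x y /\ scc B R x y.

End AF.

Arguments subset {A}. Arguments strict_subset {A}. Arguments set_eq {A}.
Arguments edge {A}. Arguments reach {A}. Arguments scc {A}.
Arguments conflict_free {A}. Arguments range {A}. Arguments stage {A}.
Arguments Dset {A}. Arguments cstep {A}. Arguments cseq {A}.
Arguments tfstg2 {A}. Arguments DeltaOp {A}. Arguments Delta {A}.
Arguments FminusDelta {A}. Arguments sccRestrict {A}.

From Stdlib Require Import Relations Wellfounded Classical
  FunctionalExtensionality PropExtensionality ProofIrrelevance.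

(** Write [K_a] for the strongly connected component of [a] in [F \ Delta].
    The sequence [C^alpha_S(a)] never cuts [K_a]: an [S]-attacker of a member
    [y] of [K_a] that [y] cannot reach back outside [Delta] would put [y] into
    [Delta], so every [S]-attacker of [K_a] lies in [K_a] itself. Conversely,
    the complement of a stable term of the sequence is a pre-fixed point of
    the [Delta]-operator, so that term avoids [Delta] and is contained in
    [K_a]. Hence the last term is [K_a] whenever it contains [a], and [tfstg2]
    asks for a stage extension on every [K_a]. Since ranges in
    [[F \ Delta]] decompose along the components, a set is a stage extension
    of [[F \ Delta]] iff its trace on every component is one. The transfinite
    sequence exists because the towers of the deflationary step map are
    well-ordered by reverse inclusion (Bourbaki-Witt). *)

Section Sets.
Context {A : Type}.
Implicit Types P Q X Y Z : aset A.

Lemma set_ext P Q : set_eq P Q -> P = Q.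
Proof.
  intro h. apply functional_extensionality; intro x.
  apply propositional_extensionality, h.
Qed.

Lemma eq_set_eq P Q : P = Q -> set_eq P Q.
Proof. intros -> x; split; trivial. Qed.

Lemma subset_refl X : subset X X.
Proof. intros x h; exact h. Qed.

Lemma subset_trans X Y Z : subset X Y -> subset Y Z -> subset X Z.
Proof. intros h1 h2 x h; auto. Qed.

Lemma subset_antisym X Y : subset X Y -> subset Y X -> X = Y.
Proof. intros h1 h2; apply set_ext; split; auto. Qed.

Definition psubset X Y := subset X Y /\ X <> Y.

Lemma psubset_trans X Y Z : psubset X Y -> psubset Y Z -> psubset X Z.
Proof.
  intros [h1 n1] [h2 n2]; split; [exact (subset_trans _ _ _ h1 h2) |].
  intros ->. apply n2, subset_antisym; assumption.
Qed.

End Sets.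

Section Reachability.
Context {A : Type} (R : A -> A -> Prop).
Implicit Types B : aset A.

Lemma reach_refl B a : B a -> reach B R a a.
Proof. split; [assumption | apply rt_refl]. Qed.

Lemma reach_trans B a b c : reach B R a b -> reach B R b c -> reach B R a c.
Proof. intros [Ba hab] [_ hbc]; split; [exact Ba | exact (rt_trans _ _ _ _ _ hab hbc)]. Qed.

Lemma reach_edge B x y : B x -> B y -> R x y -> reach B R x y.
Proof. intros Bx By Rxy; split; [exact Bx | apply rt_step; exact (conj Bx (conj By Rxy))]. Qed.

Lemma reach_target B a b : reach B R a b -> B b.
Proof.
  intros [Ba h]; revert Ba.
  induction h as [x y [_ [By _]] | x | x y z _ IH1 _ IH2]; auto.
Qed.

Lemma reach_incl B B' a b : subset B B' -> reach B R a b -> reach B' R a b.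
Proof.
  intros sub [Ba h]; split; [exact (sub a Ba) |]; clear Ba.
  induction h as [x y [Bx [By Rxy]] | x | x y z _ IH1 _ IH2].
  - apply rt_step; exact (conj (sub x Bx) (conj (sub y By) Rxy)).
  - apply rt_refl.
  - exact (rt_trans _ _ _ _ _ IH1 IH2).
Qed.

Lemma scc_in B a x : scc B R a x -> B x.
Proof. intros [h _]; exact (reach_target _ _ _ h). Qed.

Lemma scc_self B a x : scc B R a x -> scc B R a a.
Proof. intros [[Ba _] _]; split; apply reach_refl; exact Ba. Qed.

Lemma scc_sym B a x : scc B R a x -> scc B R x a.
Proof. intros [h1 h2]; split; assumption. Qed.

Lemma scc_trans B a x y : scc B R a x -> scc B R x y -> scc B R a y.
Proof. intros [h1 h2] [h3 h4]; split; eapply reach_trans; eassumption. Qed.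

Lemma scc_incl B B' a : subset B B' -> subset (scc B R a) (scc B' R a).
Proof. intros sub x [h1 h2]; split; eapply reach_incl; eassumption. Qed.

Lemma scc_path B a u v :
  scc B R a u -> scc B R a v -> clos_refl_trans A (edge B R) u v ->
  clos_refl_trans A (edge (scc B R a) R) u v.
Proof.
  intros hu hv h; revert hu hv.
  induction h as [x y [_ [_ Rxy]] | x | x y z hxy IH1 hyz IH2]; intros hx hz.
  - apply rt_step; exact (conj hx (conj hz Rxy)).
  - apply rt_refl.
  - assert (rxy : reach B R x y) by (split; [exact (scc_in _ _ _ hx) | exact hxy]).
    assert (ryz : reach B R y z) by (split; [exact (reach_target _ _ _ rxy) | exact hyz]).
    assert (hy : scc B R a y)
      by (split; [exact (reach_trans _ _ _ _ (proj1 hx) rxy)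
                 | exact (reach_trans _ _ _ _ ryz (proj2 hz))]).
    exact (rt_trans _ _ _ _ _ (IH1 hx hy) (IH2 hy hz)).
Qed.

Lemma scc_largest B B' a : subset (scc B R a) B' -> subset (scc B R a) (scc B' R a).
Proof.
  intros sub x hx.
  assert (ha := scc_self _ _ _ hx).
  apply (scc_incl (scc B R a) B' a sub).
  pose proof hx as [[_ pax] [_ pxa]].
  split; split; try assumption; apply scc_path; assumption.
Qed.

End Reachability.

Section Delta.
Context {A : Type} (R : A -> A -> Prop) (S : aset A).

Lemma DeltaOp_mono (D D' : aset A) : subset D D' -> subset (DeltaOp R S D) (DeltaOp R S D').
Proof.
  intros sub x [b [Sb [Rbx nr]]]. exists b; split; [exact Sb | split; [exact Rbx |]].
  intro r; apply nr. eapply reach_incl; [| exact r].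
  intros y nD' Dy; exact (nD' (sub y Dy)).
Qed.

Lemma Delta_prefixed : subset (DeltaOp R S (Delta R S)) (Delta R S).
Proof.
  intros x hx D hD. apply hD.
  eapply DeltaOp_mono; [| exact hx]. intros y hy; exact (hy D hD).
Qed.

Lemma conflict_free_not_Delta x : conflict_free R S -> S x -> ~ Delta R S x.
Proof.
  intros cf Sx hx.
  destruct (hx (fun y => exists b, S b /\ R b y)) as [b [Sb Rbx]].
  - intros y [b [Sb [Rby _]]]; exists b; split; assumption.
  - exact (cf b x Sb Sx Rbx).
Qed.

Lemma S_attacker_in_scc a y b :
  scc (FminusDelta R S) R a y -> S b -> R b y -> scc (FminusDelta R S) R a b.
Proof.
  intros hy Sb Rby.
  assert (ny : ~ Delta R S y) by exact (scc_in _ _ _ _ hy).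
  assert (yb : reach (FminusDelta R S) R y b).
  { apply NNPP; intro nr. apply ny, Delta_prefixed.
    exists b; split; [exact Sb | split; assumption]. }
  apply (scc_trans _ _ _ _ _ hy); split; [exact yb |].
  apply reach_edge; [exact (reach_target _ _ _ _ yb) | exact ny | exact Rby].
Qed.

Lemma cstep_fixpoint_not_Delta a X x :
  set_eq (cstep R S a X) X -> Delta R S x -> ~ X x.
Proof.
  intros hfix hx. apply (hx (fun y => ~ X y)).
  intros y [b [Sb [Rby nr]]] Xy. apply nr.
  pose proof (proj2 (hfix y) Xy) as hy.
  assert (Xb : X b).
  { apply NNPP; intro nXb. apply (proj2 (scc_in _ _ _ _ hy)).
    split; [exact Xy | exists b; repeat split; assumption]. }
  pose proof (proj2 (hfix b) Xb) as hb.
  eapply reach_incl; [| exact (reach_trans _ _ _ _ _ (proj2 hy) (proj1 hb))].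
  intros z [Xz _] nXz; exact (nXz Xz).
Qed.

Lemma cstep_fixpoint_sub_scc a X :
  set_eq (cstep R S a X) X -> subset X (scc (FminusDelta R S) R a).
Proof.
  intros hfix x Xx. apply (scc_incl _ (fun y => X y /\ ~ Dset R S X y)).
  - intros y [Xy _] hy. exact (cstep_fixpoint_not_Delta a X y hfix hy Xy).
  - exact (proj2 (hfix x) Xx).
Qed.

End Delta.

Lemma order_cases {I : Type} (lt : I -> I -> Prop) :
  (forall i j, lt i j \/ i = j \/ lt j i) ->
  forall i, (forall j, ~ lt j i)
    \/ (exists j, lt j i /\ forall k, lt k i -> k = j \/ lt k j)
    \/ ((exists j, lt j i) /\ forall j, lt j i -> exists k, lt j k /\ lt k i).
Proof.
  intros tri i.
  destruct (classic (exists j, lt j i)) as [[j0 hj0] | none].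
  2:{ left; intros j hj; apply none; exists j; exact hj. }
  destruct (classic (exists j, lt j i /\ forall k, lt k i -> k = j \/ lt k j))
    as [pred | nopred]; [right; left; exact pred |].
  right; right; split; [exists j0; exact hj0 |].
  intros j hj. apply NNPP; intro nk. apply nopred. exists j; split; [exact hj |].
  intros k hk. destruct (tri j k) as [h | [h | h]].
  - exfalso; apply nk; exists k; split; assumption.
  - left; symmetry; exact h.
  - right; exact h.
Qed.

Section Stabilization.
Context {A : Type} (R : A -> A -> Prop) (S : aset A) (a : A).

Lemma scc_sub_cseq I lt c t :
  cseq R S a I lt c t -> forall i, subset (scc (FminusDelta R S) R a) (c i).
Proof.
  intros [wf [_ [tri [_ [first [succ [lim _]]]]]]] i.
  induction i as [i IH] using (well_founded_induction wf).
  destruct (order_cases lt tri i) as [hfirst | [[j [hj imm]] | [ex dense]]];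
    intros x hx.
  - apply (first i hfirst). apply (scc_incl _ _ _ _ (fun y _ => Logic.I) x hx).
  - apply (succ i j hj imm); eapply scc_largest; [| exact hx].
    intros y hy; split; [exact (IH j hj y hy) |].
    intros [_ [b [Sb [nb Rby]]]]. apply nb, (IH j hj).
    exact (S_attacker_in_scc R S a y b hy Sb Rby).
  - apply (lim i ex dense); eapply scc_largest; [| exact hx].
    intros y hy j hj. exact (IH j hj y hy).
Qed.

Lemma cseq_last_eq_scc I lt c t :
  cseq R S a I lt c t -> c t a -> c t = scc (FminusDelta R S) R a.
Proof.
  intros hc ha.
  pose proof hc as (_ & _ & _ & _ & _ & _ & _ & [out | hfix] & _); [contradiction |].
  apply subset_antisym; [exact (cstep_fixpoint_sub_scc R S a (c t) hfix) |].
  exact (scc_sub_cseq I lt c t hc t).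
Qed.

End Stabilization.

Section Range.
Context {A : Type} (B : aset A) (R : A -> A -> Prop).

Lemma range_mono T T' : subset T T' -> subset (range B R T) (range B R T').
Proof.
  intros sub x [Tx | [y [Ty e]]]; [left; exact (sub x Tx) | right; exists y; split; auto].
Qed.

Lemma range_carrier T x : subset T B -> range B R T x -> B x.
Proof. intros sub [Tx | [y [_ [_ [Bx _]]]]]; [exact (sub x Tx) | exact Bx]. Qed.

End Range.

Section Components.
Context {A : Type} (R : A -> A -> Prop) (B : aset A).

Lemma range_component a Z z : scc B R a z ->
  (range B (sccRestrict B R) Z z <->
   range (scc B R a) R (fun x => Z x /\ scc B R a x) z).
Proof.
  intros hz; split.
  - intros [Zz | [y [Zy [_ [_ [Ryz hyz]]]]]]; [left; split; assumption |].
    assert (hy : scc B R a y) by exact (scc_trans _ _ _ _ _ hz (scc_sym _ _ _ _ hyz)).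
    right; exists y; exact (conj (conj Zy hy) (conj hy (conj hz Ryz))).
  - intros [[Zz _] | [y [[Zy hy] [_ [_ Ryz]]]]]; [left; exact Zz |].
    right; exists y; refine (conj Zy (conj (scc_in _ _ _ _ hy) (conj (scc_in _ _ _ _ hz)
      (conj Ryz _)))).
    exact (scc_trans _ _ _ _ _ (scc_sym _ _ _ _ hy) hz).
Qed.

Lemma range_outside_component a Z z : ~ scc B R a z ->
  range B (sccRestrict B R) Z z ->
  range B (sccRestrict B R) (fun x => Z x /\ ~ scc B R a x) z.
Proof.
  intros nz [Zz | [y [Zy e]]]; [left; split; assumption |].
  right; exists y; split; [split; [exact Zy |] | exact e].
  intro hy; apply nz. destruct e as [_ [_ [_ hyz]]]. exact (scc_trans _ _ _ _ _ hy hyz).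
Qed.

Lemma conflict_free_component a T : subset T (scc B R a) ->
  conflict_free (sccRestrict B R) T -> conflict_free R T.
Proof.
  intros sub cf x y Tx Ty Rxy. apply (cf x y Tx Ty). split; [exact Rxy |].
  exact (scc_trans _ _ _ _ _ (scc_sym _ _ _ _ (sub x Tx)) (sub y Ty)).
Qed.

Lemma stage_component S a : stage B (sccRestrict B R) S ->
  stage (scc B R a) R (fun x => S x /\ scc B R a x).
Proof.
  intros [SB [cfS maxS]].
  split; [intros x [_ hx]; exact hx |].
  split.
  { apply (conflict_free_component a); [intros x [_ hx]; exact hx |].
    intros x y [Sx _] [Sy _]; apply cfS; assumption. }
  intros [T [TK [cfT [incl [w [Tw nSw]]]]]].
  set (T' := fun x => (S x /\ ~ scc B R a x) \/ T x).
  assert (toT' : forall z, range (scc B R a) R T z -> range B (sccRestrict B R) T' z).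
  { intros z hz. assert (kz := range_carrier _ _ _ _ TK hz).
    apply (range_mono _ _ T); [intros x Tx; right; exact Tx |].
    apply (range_component a T z kz).
    apply (range_mono _ _ T); [intros x Tx; split; [exact Tx | exact (TK x Tx)] | exact hz]. }
  apply maxS. exists T'. split; [| split; [| split]].
  - intros x [[Sx _] | Tx]; [exact (SB x Sx) | exact (scc_in _ _ _ _ (TK x Tx))].
  - intros x y [[Sx nx] | Tx] [[Sy ny] | Ty] e.
    + exact (cfS x y Sx Sy e).
    + apply nx. exact (scc_trans _ _ _ _ _ (TK y Ty) (scc_sym _ _ _ _ (proj2 e))).
    + apply ny. exact (scc_trans _ _ _ _ _ (TK x Tx) (proj2 e)).
    + exact (cfT x y Tx Ty (proj1 e)).
  - intros z hz. destruct (classic (scc B R a z)) as [kz | nz].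
    + apply toT', incl, (range_component a S z kz), hz.
    + apply (range_mono _ _ (fun x => S x /\ ~ scc B R a x)); [intros x hx; left; exact hx |].
      exact (range_outside_component a S z nz hz).
  - exists w; split; [exact (toT' w Tw) |].
    intro hw. apply nSw, (range_component a S w (range_carrier _ _ _ _ TK Tw)), hw.
Qed.

Lemma stage_of_components S : subset S B ->
  (forall a, B a -> stage (scc B R a) R (fun x => S x /\ scc B R a x)) ->
  stage B (sccRestrict B R) S.
Proof.
  intros SB local. split; [exact SB |]. split.
  { intros x y Sx Sy [Rxy hxy].
    destruct (local x (SB x Sx)) as [_ [cf _]].
    exact (cf x y (conj Sx (scc_self _ _ _ _ hxy)) (conj Sy hxy) Rxy). }
  intros [T [TB [cfT [incl [w [Tw nSw]]]]]].
  assert (Bw : B w) by exact (range_carrier _ _ _ _ TB Tw).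
  assert (kw : scc B R w w) by (split; apply reach_refl; exact Bw).
  destruct (local w Bw) as [_ [_ maxw]]. apply maxw.
  exists (fun x => T x /\ scc B R w x). split; [| split; [| split]].
  - intros x [_ hx]; exact hx.
  - apply (conflict_free_component w); [intros x [_ hx]; exact hx |].
    intros x y [Tx _] [Ty _]; apply cfT; assumption.
  - intros z hz. assert (kz := range_carrier _ _ _ _ (fun x (h : S x /\ _) => proj2 h) hz).
    apply (range_component w T z kz), incl, (range_component w S z kz), hz.
  - exists w; split.
    + apply (range_component w T w kw), Tw.
    + intro hw. apply nSw, (range_component w S w kw), hw.
Qed.

End Components.

Record meet_deflation {A : Type} (f : aset A -> aset A)
    (glb : (aset A -> Prop) -> aset A) (Q : aset A -> Prop) : Prop := {
  step_sub : forall X, subset (f X) X;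
  glb_sub : forall P X, P X -> subset (glb P) X;
  Q_step : forall X, Q (f X);
  Q_glb : forall P, Q (glb P);
  glb_greatest : forall P X, Q X -> (forall Z, P Z -> subset X Z) -> subset X (glb P)
}.

Arguments step_sub {A f glb Q}. Arguments glb_sub {A f glb Q}.
Arguments Q_step {A f glb Q}. Arguments Q_glb {A f glb Q}.
Arguments glb_greatest {A f glb Q}.

Section Tower.
Context {A : Type} {f : aset A -> aset A} {glb : (aset A -> Prop) -> aset A}
  {Q : aset A -> Prop} (Hd : meet_deflation f glb Q).

Inductive tower : aset A -> Prop :=
  | tower_step X : tower X -> tower (f X)
  | tower_glb P : (forall X, P X -> tower X) -> tower (glb P).

Lemma tower_Q X : tower X -> Q X.
Proof. intros []; [apply (Q_step Hd) | apply (Q_glb Hd)]. Qed.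

Definition extreme X := forall Y, tower Y -> psubset X Y -> subset X (f Y).

Lemma glb_not_above P Y : tower Y -> psubset (glb P) Y -> exists Z, P Z /\ ~ subset Y Z.
Proof.
  intros hY [sub ne]. apply NNPP; intro none.
  apply ne, subset_antisym; [exact sub |].
  apply (glb_greatest Hd); [exact (tower_Q Y hY) |].
  intros Z PZ; apply NNPP; intro nYZ; apply none; exists Z; split; assumption.
Qed.

Lemma extreme_split X : tower X -> extreme X ->
  forall Y, tower Y -> subset X Y \/ subset Y (f X).
Proof.
  intros hX ext Y hY. induction hY as [Y hY IH | P hP IH].
  - destruct IH as [XY | YfX].
    + destruct (classic (X = Y)) as [<- | ne]; [right; apply subset_refl |].
      left; exact (ext Y hY (conj XY ne)).
    + right; exact (subset_trans _ _ _ (step_sub Hd Y) YfX).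
  - destruct (classic (exists Z, P Z /\ subset Z (f X))) as [[Z [PZ ZfX]] | none].
    + right; exact (subset_trans _ _ _ (glb_sub Hd P Z PZ) ZfX).
    + left; apply (glb_greatest Hd); [exact (tower_Q X hX) |].
      intros Z PZ. destruct (IH Z PZ) as [XZ | ZfX]; [exact XZ |].
      exfalso; apply none; exists Z; split; assumption.
Qed.

Lemma extreme_step_below X Y : tower X -> extreme X -> tower Y ->
  psubset (f X) Y -> subset X Y.
Proof.
  intros hX ext hY [sub ne].
  destruct (extreme_split X hX ext Y hY) as [XY | YfX]; [exact XY |].
  exfalso; apply ne, subset_antisym; assumption.
Qed.

Lemma tower_extreme X : tower X -> extreme X.
Proof.
  intro hX. induction hX as [X hX IH | P hP IH]; intros Y hY XY.
  - assert (sub := extreme_step_below X Y hX IH hY XY).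
    destruct (classic (X = Y)) as [<- | ne]; [apply subset_refl |].
    exact (subset_trans _ _ _ (step_sub Hd X) (IH Y hY (conj sub ne))).
  - destruct (glb_not_above P Y hY XY) as [Z [PZ nYZ]].
    destruct (extreme_split Z (hP Z PZ) (IH Z PZ) Y hY) as [ZY | YfZ].
    + apply (subset_trans _ _ _ (glb_sub Hd P Z PZ)), (IH Z PZ Y hY).
      split; [exact ZY | intros ->; apply nYZ, subset_refl].
    + exfalso; apply nYZ, (subset_trans _ _ _ YfZ), (step_sub Hd).
Qed.

Lemma tower_total X Y : tower X -> tower Y -> subset X Y \/ subset Y X.
Proof.
  intros hX hY.
  destruct (extreme_split X hX (tower_extreme X hX) Y hY) as [XY | YfX]; [left; exact XY |].
  right; exact (subset_trans _ _ _ YfX (step_sub Hd X)).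
Qed.

Lemma tower_fixpoint_least X Y : tower X -> f X = X -> tower Y -> subset X Y.
Proof.
  intros hX hfix hY. induction hY as [Y hY IH | P hP IH].
  - destruct (classic (X = Y)) as [<- | ne]; [rewrite hfix; apply subset_refl |].
    exact (tower_extreme X hX Y hY (conj IH ne)).
  - apply (glb_greatest Hd); [exact (tower_Q X hX) | exact IH].
Qed.

Lemma tower_acc X : tower X -> Acc (fun Y X => tower Y /\ psubset X Y) X.
Proof.
  intro hX. induction hX as [X hX IH | P hP IH]; constructor; intros Y [hY XY].
  - assert (sub := extreme_step_below X Y hX (tower_extreme X hX) hY XY).
    destruct (classic (X = Y)) as [<- | ne]; [exact IH |].
    apply (Acc_inv IH). split; [exact hY | split; assumption].
  - destruct (glb_not_above P Y hY XY) as [Z [PZ nYZ]].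
    destruct (tower_total Z Y (hP Z PZ) hY) as [ZY | YZ]; [| contradiction].
    apply (Acc_inv (IH Z PZ)).
    split; [exact hY | split; [exact ZY | intros ->; apply nYZ, subset_refl]].
Qed.

Lemma tower_wf : well_founded (fun Y X => tower Y /\ psubset X Y).
Proof. intro X; constructor; intros Y [hY _]; exact (tower_acc Y hY). Qed.

Lemma tower_top X : tower X -> (forall Y, tower Y -> ~ psubset X Y) ->
  X = glb (fun _ => False).
Proof.
  intros hX top. apply NNPP; intro ne.
  apply (top _ (tower_glb _ (fun Y h => False_ind _ h))). split; [| exact ne].
  apply (glb_greatest Hd); [exact (tower_Q X hX) | intros Z []].
Qed.

Lemma tower_succ X Y : tower X -> tower Y -> psubset X Y ->
  (forall Z, tower Z -> psubset X Z -> Z = Y \/ psubset Y Z) -> X = f Y.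
Proof.
  intros hX hY XY imm.
  assert (XfY : subset X (f Y)) by exact (tower_extreme X hX Y hY XY).
  apply NNPP; intro ne.
  destruct (imm (f Y) (tower_step Y hY) (conj XfY ne)) as [hfix | [YfY neY]].
  - destruct XY as [XY neXY]. apply neXY, subset_antisym; [exact XY |].
    exact (tower_fixpoint_least Y X hY hfix hX).
  - apply neY, subset_antisym; [exact YfY | exact (step_sub Hd Y)].
Qed.

Lemma tower_limit X : tower X ->
  (forall Z, tower Z -> psubset X Z -> exists Z', tower Z' /\ psubset X Z' /\ psubset Z' Z) ->
  X = glb (fun Z => tower Z /\ psubset X Z).
Proof.
  intros hX dense.
  assert (sub : subset X (glb (fun Z => tower Z /\ psubset X Z))).
  { apply (glb_greatest Hd); [exact (tower_Q X hX) | intros Z [_ [XZ _]]; exact XZ]. }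
  apply NNPP; intro ne.
  destruct (dense _ (tower_glb _ (fun Z h => proj1 h)) (conj sub ne))
    as [Z [hZ [XZ [Zg neZ]]]].
  apply neZ, subset_antisym; [exact Zg | exact (glb_sub Hd _ Z (conj hZ XZ))].
Qed.

Definition tower_bottom := glb tower.

Lemma tower_bottom_tower : tower tower_bottom.
Proof. exact (tower_glb tower (fun X h => h)). Qed.

Lemma tower_bottom_least X : tower X -> subset tower_bottom X.
Proof. exact (glb_sub Hd tower X). Qed.

Lemma tower_bottom_fixpoint : f tower_bottom = tower_bottom.
Proof.
  apply subset_antisym; [apply (step_sub Hd) |].
  apply tower_bottom_least, tower_step, tower_bottom_tower.
Qed.

End Tower.

Arguments tower {A} f glb _.
Arguments tower_bottom {A} f glb.

Section Construction.
Context {A : Type} (R : A -> A -> Prop) (S : aset A) (w : A).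

Definition scc_glb (P : aset A -> Prop) : aset A := scc (fun x => forall X, P X -> X x) R w.

Lemma cstep_meet_deflation :
  meet_deflation (cstep R S w) scc_glb (fun X => exists B, X = scc B R w).
Proof.
  constructor.
  - intros X x hx; exact (proj1 (scc_in _ _ _ _ hx)).
  - intros P X PX x hx; exact (scc_in _ _ _ _ hx X PX).
  - intro X; eexists; reflexivity.
  - intro P; eexists; reflexivity.
  - intros P X [B ->] low. apply scc_largest. intros x hx Z PZ; exact (low Z PZ x hx).
Qed.

Local Notation Hd := cstep_meet_deflation.
Local Notation tw := (tower (cstep R S w) scc_glb).

Definition stage_index := { X : aset A | tw X }.

Definition stage_lt (i j : stage_index) : Prop := psubset (proj1_sig j) (proj1_sig i).

Definition stage_last : stage_index := exist _ _ tower_bottom_tower.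

Lemma stage_index_eq (i j : stage_index) : proj1_sig i = proj1_sig j -> i = j.
Proof. destruct i as [X hX], j as [Y hY]; simpl; intros <-; f_equal; apply proof_irrelevance. Qed.

Lemma stage_lt_wf : well_founded stage_lt.
Proof.
  apply (wf_incl _ _ (fun i j => tw (proj1_sig i) /\ psubset (proj1_sig j) (proj1_sig i))).
  - intros i j hij; split; [exact (proj2_sig i) | exact hij].
  - exact (wf_inverse_image _ _ _ (@proj1_sig _ _) (tower_wf Hd)).
Qed.

Lemma stage_lt_trans i j k : stage_lt i j -> stage_lt j k -> stage_lt i k.
Proof. intros hij hjk; exact (psubset_trans _ _ _ hjk hij). Qed.

Lemma stage_lt_total i j : stage_lt i j \/ i = j \/ stage_lt j i.
Proof.
  destruct (classic (proj1_sig i = proj1_sig j)) as [e | ne].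
  - right; left; exact (stage_index_eq i j e).
  - destruct (tower_total Hd _ _ (proj2_sig i) (proj2_sig j)) as [ij | ji].
    + right; right; split; assumption.
    + left; split; [assumption | intro e; apply ne; symmetry; exact e].
Qed.

Lemma stage_lt_last i : i = stage_last \/ stage_lt i stage_last.
Proof.
  destruct (classic (proj1_sig i = proj1_sig stage_last)) as [e | ne].
  - left; exact (stage_index_eq _ _ e).
  - right; split; [exact (tower_bottom_least Hd _ (proj2_sig i)) |].
    intro e; apply ne; symmetry; exact e.
Qed.

Lemma stage_first i : (forall j, ~ stage_lt j i) ->
  set_eq (proj1_sig i) (scc (fun _ => True) R w).
Proof.
  intro first. rewrite (tower_top Hd _ (proj2_sig i)).
  - intro x; split; apply scc_incl; [intros y _; exact I | intros y _ _ []].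
  - intros Y hY XY. exact (first (exist _ Y hY) XY).
Qed.

Lemma stage_succ i j : stage_lt j i -> (forall k, stage_lt k i -> k = j \/ stage_lt k j) ->
  set_eq (proj1_sig i) (cstep R S w (proj1_sig j)).
Proof.
  intros hji imm. apply eq_set_eq, (tower_succ Hd _ _ (proj2_sig i) (proj2_sig j) hji).
  intros Z hZ XZ. destruct (imm (exist _ Z hZ) XZ) as [<- | h]; [left; reflexivity | right; exact h].
Qed.

Lemma stage_limit i : (forall j, stage_lt j i -> exists k, stage_lt j k /\ stage_lt k i) ->
  set_eq (proj1_sig i) (scc (fun x => forall j, stage_lt j i -> proj1_sig j x) R w).
Proof.
  intro dense. rewrite (tower_limit Hd _ (proj2_sig i)).
  - intro x; split; apply scc_incl.
    + intros y hy j hj. exact (hy _ (conj (proj2_sig j) hj)).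
    + intros y hy Z [hZ XZ]. exact (hy (exist _ Z hZ) XZ).
  - intros Z hZ XZ. destruct (dense (exist _ Z hZ) XZ) as [[Z' hZ'] [h1 h2]].
    exists Z'; split; [exact hZ' | split; assumption].
Qed.

Lemma stage_last_fixpoint :
  set_eq (cstep R S w (proj1_sig stage_last)) (proj1_sig stage_last).
Proof. exact (eq_set_eq _ _ (tower_bottom_fixpoint Hd)). Qed.

Lemma stage_before_last i : stage_lt i stage_last ->
  proj1_sig i w /\ ~ set_eq (cstep R S w (proj1_sig i)) (proj1_sig i).
Proof.
  intros [sub ne].
  assert (moving : ~ set_eq (cstep R S w (proj1_sig i)) (proj1_sig i)).
  { intro hfix. apply ne, subset_antisym; [exact sub |].
    exact (tower_fixpoint_least Hd _ _ (proj2_sig i) (set_ext _ _ hfix) tower_bottom_tower). }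
  split; [| exact moving].
  apply NNPP; intro nw. apply moving.
  destruct (tower_Q Hd _ (proj2_sig i)) as [B e].
  intro x; split; [apply (step_sub Hd) |].
  intro hx. exfalso; apply nw. rewrite e in hx |- *. exact (scc_self _ _ _ _ hx).
Qed.

Lemma exists_cseq : exists (I : Type) (lt : I -> I -> Prop) (c : I -> aset A) (t : I),
  cseq R S w I lt c t.
Proof.
  exists stage_index, stage_lt, (@proj1_sig _ _), stage_last.
  exact (conj stage_lt_wf (conj stage_lt_trans (conj stage_lt_total (conj stage_lt_last
    (conj stage_first (conj stage_succ (conj (fun i _ => stage_limit i)
    (conj (or_intror stage_last_fixpoint) stage_before_last)))))))).
Qed.

End Construction.

Theorem theorem9 (A : Type) (R : A -> A -> Prop) (S : A -> Prop) :
  tfstg2 R S <->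
  (conflict_free R S /\
   stage (FminusDelta R S) (sccRestrict (FminusDelta R S) R) S).
Proof.
  split.
  - intros [cf local]. split; [exact cf |].
    apply stage_of_components; [intros x Sx; exact (conflict_free_not_Delta R S x cf Sx) |].
    intros a na. destruct (exists_cseq R S a) as [I [lt [c [t hc]]]].
    assert (ha : c t a)
      by (apply (scc_sub_cseq R S a I lt c t hc t); split; apply reach_refl; exact na).
    rewrite <- (cseq_last_eq_scc R S a I lt c t hc ha).
    destruct (local a I lt c t hc) as [out | st]; [contradiction | exact st].
  - intros [cf st]. split; [exact cf |]. intros a I lt c t hc.
    destruct (classic (c t a)) as [ha | out]; [right | left; exact out].
    rewrite (cseq_last_eq_scc R S a I lt c t hc ha). apply stage_component, st.
Qed.
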